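(* Let $D=(V,E;s,t)$ be a directed network with unit arc capacities (parallel arcs allowed), let $N\subseteq E$ be the set of private arcs (players), $M=E\setminus N$ the public arcs, and assume (A1) every $s$-$t$ path of $D$ contains an arc of $N$ and (A2) every arc of $D$ lies on some $s$-$t$ path. Let $\Gamma_D=(N,\gamma)$ be the associated flow game with public arcs, and let $\epsilon^*=\max\{\epsilon:\mathcal{C}_{\epsilon}(\Gamma_D)\neq\emptyset\}$. Then $\epsilon^*=\frac{\sigma_E}{\sigma_N}-1$. Moreover: (i) $\frac{\sigma_N}{\sigma_E}\,\mathcal{C}_{\epsilon^*}(\Gamma_D)=\{x\in\mathbb{R}^N_{\ge 0}: x(N)=\sigma_N,\ x(N\cap P)\ge 1 \text{ for all } P\in\mathscr{P}\}$; (ii) $\frac{\sigma_N}{\sigma_E}\,\mathcal{C}_{\epsilon^*}(\Gamma_D)$ is the convex hull of the incidence vectors (in $\mathbb{R}^N$) of the minimum $s$-$t$ cuts constrained to $N$.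
   Context: A path is a set of arcs joining a sequence of distinct vertices, all arcs directed along the sequence; $\mathscr{P}$ is the set of all $s$-$t$ paths of $D$. Each arc of $N$ is owned by a distinct player and the player set is identified with $N$; public arcs may be used by every coalition for free. For $S\subseteq N$, $\gamma(S)$ is the maximum number of pairwise arc-disjoint $s$-$t$ paths in the network $D_S=(V,S\cup M;s,t)$ (its maximum flow value). For $F\subseteq E$, two paths are disjoint on $F$ if they share no arc of $F$, and $\sigma_F$ denotes the maximum number of $s$-$t$ paths that are pairwise disjoint on $F$ (so $\sigma_E=\gamma(N)$). An $s$-$t$ cut constrained to $F$ is a set of arcs contained in $F$ that meets every $s$-$t$ path; a minimum one is one of minimum cardinality. For $x\in\mathbb{R}^N$ and $S\subseteq N$, $x(S)=\sum_{i\in S}x_i$. An allocation of $\Gamma_D$ is $x\in\mathbb{R}^N_{\ge0}$ with $x(N)=\gamma(N)$. For $\epsilon\in\mathbb{R}$, the $\epsilon$-approximate core is $\mathcal{C}_\epsilon(\Gamma_D)=\{x \text{ allocation}: x(S)\ge(1+\epsilon)\gamma(S)\ \forall S\subseteq N\}$. *)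

From HB Require Import structures.
From mathcomp Require Import all_boot all_order all_algebra.
From mathcomp Require Import boolp reals.
Set Implicit Arguments. Unset Strict Implicit. Unset Printing Implicit Defensive.
Import Order.TTheory GRing.Theory Num.Theory.
Local Open Scope ring_scope.

(* Directed network D = (V, E; s, t): arcs e : E go from src e to dst e;
   parallel arcs are allowed since E is an arbitrary finite type. *)

(* p = [e1; ...; ek] is an s-t path sequence: vertex sequence
   s = v0, v1 = dst e1, ..., vk = dst ek = t is duplicate-free and
   src e_i = v_{i-1}. *)
Definition is_path_seq (V E : finType) (src dst : E -> V) (s t : V)
  (p : seq E) : bool :=
  [&& uniq (s :: map dst p),
      last s (map dst p) == t &
      map src p == belast s (map dst p)].

Definition is_path (V E : finType) (src dst : E -> V) (s t : V)
  (P : {set E}) : Prop :=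
  exists p : seq E, is_path_seq src dst s t p /\ P = [set e in p].

Definition disj_on_family (V E : finType) (src dst : E -> V) (s t : V)
  (F : {set E}) (k : nat) : Prop :=
  exists f : 'I_k -> {set E},
    (forall i, is_path src dst s t (f i)) /\
    (forall i j, i != j -> f i :&: f j :&: F = set0).

(* sigma_F : the maximum number of s-t paths pairwise disjoint on F.
   (The range bound #|E| is never reached when every path meets F in an
   arc, which holds for F = N, F = E under (A1).) *)
Definition sigma (V E : finType) (src dst : E -> V) (s t : V)
  (F : {set E}) : nat :=
  (\max_(k < #|E|.+1 | `[< disj_on_family src dst s t F k >]) k)%N.

(* k pairwise arc-disjoint s-t paths in D_S = (V, S cup M; s, t),
   M = E \ N. *)
Definition disj_family_in (V E : finType) (src dst : E -> V) (s t : V)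
  (N S : {set E}) (k : nat) : Prop :=
  exists f : 'I_k -> {set E},
    (forall i, is_path src dst s t (f i) /\ f i \subset S :|: ~: N) /\
    (forall i j, i != j -> f i :&: f j = set0).

(* gamma(S) : maximum flow value of D_S (unit capacities). *)
Definition gamma (V E : finType) (src dst : E -> V) (s t : V)
  (N S : {set E}) : nat :=
  (\max_(k < #|E|.+1 | `[< disj_family_in src dst s t N S k >]) k)%N.

Notation player N := {e | e \in N}.

Definition xsum (E : finType) (R : realType) (N : {set E})
  (x : player N -> R) (S : {set E}) : R :=
  \sum_(i : player N | val i \in S) x i.

Definition in_approx_core (R : realType) (V E : finType) (src dst : E -> V)
  (s t : V) (N : {set E}) (eps : R) (x : player N -> R) : Prop :=
  (forall i, 0 <= x i) /\
  xsum x N = (gamma src dst s t N N)%:R /\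
  (forall S : {set E}, S \subset N ->
     (1 + eps) * (gamma src dst s t N S)%:R <= xsum x S).

Definition is_cut_in (V E : finType) (src dst : E -> V) (s t : V)
  (N C : {set E}) : Prop :=
  C \subset N /\ (forall P, is_path src dst s t P -> P :&: C != set0).

Definition is_min_cut_in (V E : finType) (src dst : E -> V) (s t : V)
  (N C : {set E}) : Prop :=
  is_cut_in src dst s t N C /\
  (forall C', is_cut_in src dst s t N C' -> (#|C| <= #|C'|)%N).

Definition in_hull_min_cuts (R : realType) (V E : finType) (src dst : E -> V)
  (s t : V) (N : {set E}) (y : player N -> R) : Prop :=
  exists lam : {set E} -> R,
    (forall C, 0 <= lam C) /\
    (forall C, ~ is_min_cut_in src dst s t N C -> lam C = 0) /\
    \sum_(C : {set E}) lam C = 1 /\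
    (forall i : player N, y i = \sum_(C : {set E}) lam C * (val i \in C)%:R).

From HB Require Import structures.
From mathcomp Require Import all_boot all_order all_algebra.
From mathcomp Require Import boolp reals.
From mathcomp Require Import ring lra zify.
Set Implicit Arguments. Unset Strict Implicit. Unset Printing Implicit Defensive.
Import Order.TTheory GRing.Theory Num.Theory.

(* Scaling by sigma_N / sigma_E identifies the eps*-core with the polytope
   Q = {y >= 0 : y(N) = sigma_N, y(P) >= 1 for every s-t path P}.  For y in Q every
   coalition S gets y(S) >= gamma(S), as the gamma(S) arc-disjoint paths using S and the
   public arcs each carry weight at least 1; conversely, sigma_N paths pairwise disjoint
   on N show (1 + eps) sigma_N <= x(N) = sigma_E for every x in the eps-core.
   Menger's theorem for cuts constrained to N (by augmenting paths, the public arcs having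
   unbounded capacity) says that minimum such cuts have sigma_N arcs, so their incidence
   vectors lie in Q.  Conversely, for y in Q let d(v) be the y-length of a shortest walk
   from s to v, truncated at 1.  For each level theta in [0, 1) the arcs of N crossing from
   d <= theta to d > theta form a cut; y dominates the average of these cuts over theta,
   whose total weight is at least sigma_N = y(N).  Hence y is that average, and every cut
   involved is minimum. *)

Section Walks.
Variables (V E : finType) (src dst : E -> V).

Definition step_from (a : E * bool) := if a.2 then src a.1 else dst a.1.
Definition step_to (a : E * bool) := if a.2 then dst a.1 else src a.1.

Fixpoint is_walk (x : V) (l : seq (E * bool)) : bool :=
  if l is a :: l' then (step_from a == x) && is_walk (step_to a) l' else true.

Definition walk_end x l := last x (map step_to l).

Lemma is_walk_cat x l1 l2 :
  is_walk x (l1 ++ l2) = is_walk x l1 && is_walk (walk_end x l1) l2.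
Proof. by elim: l1 x => [|a l1 IH] x //=; rewrite IH andbA. Qed.

Lemma walk_end_cat x l1 l2 : walk_end x (l1 ++ l2) = walk_end (walk_end x l1) l2.
Proof. by rewrite /walk_end map_cat last_cat. Qed.

Lemma walk_step_mem x l a : is_walk x l -> a \in l ->
  step_from a \in x :: map step_to l /\ step_to a \in map step_to l.
Proof.
elim: l x => [|b l IH] x //= /andP[/eqP bx wl].
rewrite inE => /orP[/eqP->|al]; first by rewrite bx !mem_head.
have [h1 h2] := IH _ wl al.
by split; rewrite inE ?h1 ?h2 orbT.
Qed.

Definition simple_subwalk x l l' :=
  [/\ is_walk x l', walk_end x l' = walk_end x l,
      uniq (x :: map step_to l') & subseq l' l].

Lemma simple_walk_suffix z l x : is_walk z l -> uniq (z :: map step_to l) ->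
  x \in z :: map step_to l ->
  exists l', [/\ is_walk x l', walk_end x l' = walk_end z l,
                 uniq (x :: map step_to l') & subseq l' l].
Proof.
elim: l z => [|a l IH] z /=; first by rewrite inE => _ _ /eqP->; exists [::].
move=> /andP[/eqP az wl] /andP[zl ul]; rewrite inE => /predU1P[->|xl].
  by exists (a :: l); split; rewrite //= ?az ?eqxx ?wl ?zl ?ul.
have [l' [wl' el' ul' sl']] := IH _ wl ul xl.
by exists l'; split => //; apply: subseq_trans sl' (subseq_cons _ _).
Qed.

Lemma shorten_walk x l : is_walk x l -> exists l', simple_subwalk x l l'.
Proof.
elim: l x => [|a l IH] x /=; first by exists [::].
move=> /andP[/eqP ax /IH [l' [wl' el' ul' sl']]].
have sl'l : subseq l' (a :: l) := subseq_trans sl' (subseq_cons _ _).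
case: (boolP (x \in step_to a :: map step_to l')) => xl'.
  have [l'' [wl'' el'' ul'' sl'']] := simple_walk_suffix wl' ul' xl'.
  exists l''; split => //; first by rewrite el'' el'.
  exact: subseq_trans sl'' sl'l.
exists (a :: l'); split.
- by rewrite /= ax eqxx.
- exact: el'.
- by apply/andP; split.
- by rewrite /= eqxx.
Qed.

Lemma simple_walk_uniq_arcs x l :
  is_walk x l -> uniq (x :: map step_to l) -> uniq (map fst l).
Proof.
elim: l x => [|a l IH] x //= /andP[/eqP ax wl] /andP[xl ul].
rewrite (IH _ wl ul) andbT; apply/mapP => -[b bl ab].
have [bfrom bto] := walk_step_mem wl bl.
have : x = step_from b \/ x = step_to b.
  by rewrite -ax /step_from /step_to ab; case: a.2 b.2 => [] []; auto.
by case=> xb; move: xl; rewrite xb ?bfrom // inE bto orbT.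
Qed.

Definition forward (p : seq E) := map (fun e => (e, true)) p.

Lemma forward_fst l : all snd l -> forward (map fst l) = l.
Proof. by elim: l => [|[e b] l IH] //= /andP[/= -> /IH ->]. Qed.

Lemma is_path_seq_walk s t p : is_path_seq src dst s t p =
  [&& uniq (s :: map step_to (forward p)), walk_end s (forward p) == t
    & is_walk s (forward p)].
Proof.
rewrite /walk_end; have -> : map step_to (forward p) = map dst p by rewrite -map_comp.
have -> : is_walk s (forward p) = (map src p == belast s (map dst p)).
  by elim: p s => [|e p IH] s //=; rewrite IH eqseq_cons.
by [].
Qed.

Lemma simple_forward_walk_path s l :
  is_walk s l -> all snd l -> uniq (s :: map step_to l) ->
  is_path_seq src dst s (walk_end s l) (map fst l).
Proof. by move=> wl al ul; rewrite is_path_seq_walk forward_fst // ul wl eqxx. Qed.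

Lemma path_seq_uniq s t p : is_path_seq src dst s t p -> uniq p.
Proof. by case/and3P => /= /andP[_ /map_uniq]. Qed.

Lemma walk_leaves (X : pred V) x l : is_walk x l -> x \in X ->
  walk_end x l \notin X -> exists2 a, a \in l & (step_from a \in X) && (step_to a \notin X).
Proof.
elim: l x => [|a l IH] x /=; first by move=> _ ->.
move=> /andP[/eqP ax wl] xX lX; case: (boolP (step_to a \in X)) => aX.
  by have [b bl bX] := IH _ wl aX lX; exists b; rewrite // inE bl orbT.
by exists a; rewrite ?mem_head // ax xX.
Qed.

Lemma path_leaves (X : pred V) s t p : is_path_seq src dst s t p ->
  s \in X -> t \notin X -> exists2 e, e \in p & (src e \in X) && (dst e \notin X).
Proof.
rewrite is_path_seq_walk => /and3P[_ /eqP <- wp] sX tX.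
by have [a /mapP[e ep ->]] := walk_leaves wp sX tX; exists e.
Qed.

End Walks.

Section Excess.
Variables (V E : finType) (src dst : E -> V).
Local Open Scope ring_scope.
Implicit Types (f g : E -> int) (X : {set V}).

Definition excess f v : int :=
  \sum_(e | dst e == v) f e - \sum_(e | src e == v) f e.

Definition inflow f X := \sum_(e | (dst e \in X) && (src e \notin X)) f e.
Definition outflow f X := \sum_(e | (src e \in X) && (dst e \notin X)) f e.

Lemma sum_excess_set f X : \sum_(v in X) excess f v = inflow f X - outflow f X.
Proof.
have sum_ends (p : E -> V) :
    \sum_(v in X) \sum_(e | p e == v) f e = \sum_(e | p e \in X) f e.
  rewrite [RHS](partition_big p (mem X)) //=; apply: eq_bigr => v vX.
  by apply: eq_bigl => e; case: eqP => [->|]; rewrite ?vX ?andbF.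
rewrite /excess sumrB !sum_ends (bigID (fun e => src e \in X)) /=.
rewrite [X in _ - X](bigID (fun e => dst e \in X)) /=.
under [X in _ - (X + _)]eq_bigl do rewrite andbC.
by rewrite opprD addrACA subrr add0r.
Qed.

Lemma sum_excess f : \sum_v excess f v = 0.
Proof.
have := sum_excess_set f setT; under eq_bigl do rewrite in_setT; move=> ->.
by rewrite /inflow /outflow !big1 ?subr0 // => e /andP[_]; rewrite in_setT.
Qed.

Lemma eq_excess f g : f =1 g -> excess f =1 excess g.
Proof. by move=> fg v; rewrite /excess; congr (_ - _); apply: eq_bigr. Qed.

Lemma excessD f g v : excess (fun e => f e + g e) v = excess f v + excess g v.
Proof. by rewrite /excess !big_split /=; ring. Qed.

Definition step_sign (a : E * bool) : int := if a.2 then 1 else -1.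

Definition walk_flow (l : seq (E * bool)) e : int :=
  \sum_(a <- l) (a.1 == e)%:Z * step_sign a.

Lemma excess_walk_flow x l v : is_walk src dst x l ->
  excess (walk_flow l) v = (walk_end src dst x l == v)%:Z - (x == v)%:Z.
Proof.
have pick (P : pred E) e0 (c : int) : \sum_(e | P e) (e0 == e)%:Z * c = (P e0)%:Z * c.
  rewrite big_mkcond (bigD1 e0) //= eqxx big1 ?addr0 => [|e /negbTE ne].
    by case: (P e0); rewrite ?mul0r.
  by rewrite eq_sym ne; case: (P e); rewrite ?mul0r.
elim: l x => [|a l IH] x /=.
  by rewrite /walk_end /= subrr /excess /walk_flow !big1 ?subrr // => e; rewrite big_nil.
move=> /andP[/eqP ax wl].
rewrite (eq_excess (g := fun e => (a.1 == e)%:Z * step_sign a + walk_flow l e)); last first.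
  by move=> e; rewrite /walk_flow big_cons.
rewrite excessD (IH _ wl) /excess !pick -ax.
by case: a {ax wl} => e [] /=; rewrite /step_sign /step_from /step_to /walk_end /=; ring.
Qed.

Lemma excess_add_walk f x l (c : int) v : is_walk src dst x l ->
  excess (fun e => f e + c * walk_flow l e) v =
  excess f v + c * ((walk_end src dst x l == v)%:Z - (x == v)%:Z).
Proof.
move=> wl; rewrite excessD -(excess_walk_flow v wl) /excess -!mulr_sumr.
by rewrite mulrBr.
Qed.

Lemma walk_flow_forward p e : uniq p -> walk_flow (forward p) e = (e \in p)%:Z.
Proof.
move=> up; rewrite /walk_flow big_map /step_sign /= -count_uniq_mem //.
elim: p {up} => [|x p IH]; first by rewrite big_nil.
by rewrite big_cons IH /= mulr1 eq_sym; case: (x == e).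
Qed.

Lemma walk_flow_cases l e : uniq (map fst l) ->
  [\/ walk_flow l e = 0, (e, true) \in l /\ walk_flow l e = 1
    | (e, false) \in l /\ walk_flow l e = -1].
Proof.
elim: l => [|a l IH] /=; first by constructor 1; rewrite /walk_flow big_nil.
move=> /andP[al ul]; rewrite /walk_flow big_cons -/(walk_flow l e).
have [ae|_] := eqVneq a.1 e.
  have -> : walk_flow l e = 0.
    rewrite /walk_flow big_seq big1 // => b bl.
    suff /negbTE-> : b.1 != e by rewrite mul0r.
    by apply: contraNneq al => be; rewrite ae -be map_f.
  by case: a ae {al} => e' [] /= ->; [constructor 2 | constructor 3];
    rewrite ?mem_head /step_sign /= ?addr0.
rewrite mul0r add0r.
by case: (IH ul) => [|[m h]|[m h]]; [constructor 1 | constructor 2 | constructor 3];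
  rewrite // inE m orbT.
Qed.

End Excess.

Section FeasibleFlows.
Variables (V E : finType) (src dst : E -> V) (s t : V) (N : {set E}).
Hypothesis st : s != t.
Local Open Scope ring_scope.
Implicit Types (f : E -> int) (X : {set V}) (ok : pred (E * bool)).

Local Notation excess := (excess src dst).
Local Notation is_walk := (is_walk src dst).
Local Notation walk_end := (walk_end src dst).
Local Notation step_from := (step_from src dst).
Local Notation step_to := (step_to src dst).

(* Public arcs are uncapacitated, so that saturated cuts consist of private arcs. *)
Definition feasible f := [/\ forall e, 0 <= f e, forall e, e \in N -> f e <= 1 &
  forall v, v != s -> v != t -> excess f v = 0].

Lemma flow_value_cut f X : feasible f -> s \in X -> t \notin X ->
  excess f t = outflow src dst f X - inflow src dst f X.
Proof.
move=> [_ _ conserve] sX tX.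
have excess_s : excess f s = - excess f t.
  apply/eqP; rewrite -addr_eq0 -(sum_excess src dst f) (bigD1 s) //= (bigD1 t) 1?eq_sym //=.
  by rewrite big1 ?addr0 // => v /andP[vt vs]; apply: conserve.
have : \sum_(v in X) excess f v = excess f s.
  rewrite (bigD1 s) //= big1 ?addr0 // => v /andP[vX vs].
  by apply: conserve => //; apply: contraNneq tX => <-.
by rewrite sum_excess_set excess_s => h; rewrite -[LHS]opprK -h opprB.
Qed.

Lemma feasible_add_walk f l (c : int) : feasible f -> is_walk s l -> walk_end s l = t ->
  (forall e, 0 <= f e + c * walk_flow l e) ->
  (forall e, e \in N -> f e + c * walk_flow l e <= 1) ->
  feasible (fun e => f e + c * walk_flow l e) /\
  excess (fun e => f e + c * walk_flow l e) t = excess f t + c.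
Proof.
move=> [_ _ conserve] wl lt ge0 le1; rewrite !(excess_add_walk _ _ _ wl) lt.
split; last by rewrite eqxx (negbTE st) subr0 mulr1.
split => // v vs vt; rewrite (excess_add_walk _ _ _ wl) lt conserve //.
by rewrite eq_sym (negbTE vt) eq_sym (negbTE vs) subrr mulr0 addr0.
Qed.

Definition reach ok v :=
  exists l, [/\ is_walk s l, all ok l & walk_end s l = v].

Lemma reach_simple ok v : reach ok v ->
  exists l, [/\ is_walk s l, all ok l, walk_end s l = v & uniq (s :: map step_to l)].
Proof.
move=> [l [wl al <-]]; have [l' [wl' <- ul' sl']] := shorten_walk wl.
exists l'; split => //; apply/allP => a /(mem_subseq sl'); exact: allP al a.
Qed.

Lemma reach_or_closed_cut ok : reach ok t \/
  exists X, [/\ s \in X, t \notin X &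
                forall a, step_from a \in X -> ok a -> step_to a \in X].
Proof.
case: (asboolP (reach ok t)) => rt; [by left | right].
exists [set v | `[< reach ok v >]]; rewrite !inE; split.
- by apply/asboolP; exists [::].
- by apply/asboolP.
move=> a; rewrite !inE => /asboolP[l [wl al la]] oka; apply/asboolP.
exists (rcons l a); rewrite -cats1 is_walk_cat all_cat walk_end_cat wl al la.
by rewrite /= eqxx oka.
Qed.

Lemma positive_flow_path f : feasible f -> 0 < excess f t ->
  exists p, is_path_seq src dst s t p /\ forall e, e \in p -> 0 < f e.
Proof.
move=> ff pos; pose ok a := a.2 && (0 < f a.1).
case: (reach_or_closed_cut ok) => [/reach_simple[l [wl al lt ul]] | [X [sX tX closed]]].
  have fwd : all snd l by apply/allP => a /(allP al) /andP[].
  exists (map fst l); rewrite -lt; split; first exact: simple_forward_walk_path.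
  by move=> e /mapP[a /(allP al) /andP[_ pa] ->].
have out0 : outflow src dst f X <= 0.
  apply: sumr_le0 => e /andP[eX eX']; rewrite leNgt; apply: contra eX' => fe.
  exact: (closed (e, true)) eX _.
have in0 : 0 <= inflow src dst f X by apply: sumr_ge0 => e _; case: ff.
by move: pos; rewrite (flow_value_cut ff sX tX); lia.
Qed.

End FeasibleFlows.

Lemma leq_card_hitting (T : finType) (F C : {set T}) k (g : 'I_k -> {set T}) :
  C \subset F -> (forall i, g i :&: C != set0) ->
  (forall i j, i != j -> g i :&: g j :&: F = set0) -> (k <= #|C|)%N.
Proof.
move=> CF gC gd; pose h i := xchoose (set0Pn _ (gC i)).
have hP i : h i \in g i :&: C := xchooseP (set0Pn _ (gC i)).
have h_inj : injective h.
  move=> i j hij; apply/eqP; apply: contraTT isT => ij.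
  have /setP/(_ (h i)) := gd i j ij; have := hP i; have := hP j.
  by rewrite -hij !inE => /andP[-> _] /andP[-> /(subsetP CF) ->].
rewrite -[k]card_ord -(card_imset _ h_inj); apply: subset_leq_card.
by apply/subsetP => _ /imsetP[i _ ->]; have /setIP[] := hP i.
Qed.

Lemma bigmax_asbool_attained n (P : nat -> Prop) :
  P 0%N -> P (\max_(k < n.+1 | `[< P k >]) k)%N.
Proof.
move=> P0; apply: (big_ind P) => // [x y Px Py|i /asboolP //].
by rewrite /maxn; case: ltnP.
Qed.

Lemma leq_bigmax_asbool n (P : nat -> Prop) k : P k -> (k <= n)%N ->
  (k <= \max_(i < n.+1 | `[< P i >]) i)%N.
Proof.
move=> Pk kn; rewrite -ltnS in kn.
by apply: (leq_bigmax_cond (Ordinal kn)); apply/asboolP.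
Qed.

Section Sigma.
Variables (V E : finType) (src dst : E -> V) (s t : V) (N : {set E}).

Lemma sigma_family F : disj_on_family src dst s t F (sigma src dst s t F).
Proof. by apply: bigmax_asbool_attained; exists (fun _ => set0); split; case. Qed.

Lemma sigma_max F k :
  disj_on_family src dst s t F k -> (k <= #|E|)%N -> (k <= sigma src dst s t F)%N.
Proof. exact: leq_bigmax_asbool. Qed.

Lemma gamma_family S : disj_family_in src dst s t N S (gamma src dst s t N S).
Proof. by apply: bigmax_asbool_attained; exists (fun _ => set0); split; case. Qed.

Lemma gamma_max S k :
  disj_family_in src dst s t N S k -> (k <= #|E|)%N -> (k <= gamma src dst s t N S)%N.
Proof. exact: leq_bigmax_asbool. Qed.

End Sigma.

Section Menger.
Variables (V E : finType) (src dst : E -> V) (s t : V) (N : {set E}).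
Hypothesis st : s != t.
Hypothesis path_meets_N : forall P, is_path src dst s t P -> P :&: N != set0.
Local Open Scope ring_scope.
Implicit Types (f : E -> int).

Local Notation excess := (excess src dst).
Local Notation feasible := (feasible src dst s t N).
Local Notation sN := (sigma src dst s t N).

Lemma flow_decomposition n f : feasible f -> excess f t = n%:Z ->
  exists g : 'I_n -> {set E},
    [/\ forall i, is_path src dst s t (g i), forall i e, e \in g i -> 0 < f e
      & forall i j, i != j -> g i :&: g j :&: N = set0].
Proof.
elim: n f => [|n IH] f ff fn; first by exists (fun _ => set0); split; case.
have /(positive_flow_path st ff)[p [pp pos]] : 0 < excess f t by rewrite fn.
have := pp; rewrite is_path_seq_walk => /and3P[_ /eqP pt wp].
pose f' e := f e + (-1) * walk_flow (forward p) e.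
have f'E e : f' e = f e - (e \in p)%:Z.
  by rewrite /f' walk_flow_forward ?mulN1r // (path_seq_uniq pp).
have f'_le e : f' e <= f e by rewrite f'E lerBlDr lerDl.
have [ff' f'n] : feasible f' /\ excess f' t = excess f t + (-1).
  have [f_ge0 f_le1 _] := ff; apply: feasible_add_walk => // e.
    by rewrite -/(f' e) f'E; case: (boolP (e \in p)) => [/pos|_]; rewrite ?subr0 //; lia.
  by move=> eN; rewrite -/(f' e) (le_trans (f'_le e)) ?f_le1.
have /(IH f' ff')[g [gp gpos gd]] : excess f' t = n%:Z by rewrite f'n fn; lia.
have p_disj i : g i :&: [set e in p] :&: N = set0.
  apply/setP => e; rewrite !inE; apply/negP => /andP[/andP[ge ep] eN].
  by have [_ f_le1 _] := ff; have := gpos i e ge; have := f_le1 e eN; rewrite f'E ep /=; lia.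
exists (fun i => if unlift ord_max i is Some j then g j else [set e in p]); split.
- by move=> i; case: unliftP => [j _|_]; [apply: gp | exists p].
- move=> i e; case: unliftP => [j _ /(gpos j e)|_]; last by rewrite inE => /pos.
  by move/lt_le_trans; apply.
- move=> i j; case: (unliftP ord_max i) => [i' ->|->]; case: (unliftP ord_max j) => [j' ->|->].
  + by move=> ij; apply: gd; apply: contraNneq ij => ->.
  + by rewrite p_disj.
  + by rewrite [[set e in p] :&: _]setIC p_disj.
  + by rewrite eqxx.
Qed.

Lemma flow_value_le_sigma f (k : nat) : feasible f -> excess f t = k%:Z -> (k <= sN)%N.
Proof.
move=> ff fk; have [g [gp _ gd]] := flow_decomposition ff fk.
apply: sigma_max; first by exists g.
apply: leq_trans (max_card N).
by apply: (leq_card_hitting (subxx N)) gd => i; apply/path_meets_N/gp.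
Qed.

Definition residual f (a : E * bool) :=
  if a.2 then (a.1 \notin N) || (f a.1 == 0) else 0 < f a.1.

Lemma augmenting_walk f : feasible f -> reach src dst s (residual f) t ->
  exists g, feasible g /\ excess g t = excess f t + 1.
Proof.
move=> ff /reach_simple[l [wl res lt ul]]; have [f_ge0 f_le1 _] := ff.
have uniq_arcs := simple_walk_uniq_arcs wl ul.
exists (fun e => f e + 1 * walk_flow l e).
apply: feasible_add_walk => // e; rewrite mul1r.
- have [->|[_ ->]|[back ->]] := walk_flow_cases e uniq_arcs; rewrite ?addr0 //.
    by have := f_ge0 e; lia.
  by have := allP res _ back; rewrite /residual /=; lia.
- move=> eN; have [->|[fwd ->]|[_ ->]] := walk_flow_cases e uniq_arcs.
  + by rewrite addr0 f_le1.
  + by have := allP res _ fwd; rewrite /residual /= eN /= => /eqP->.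
  + by have := f_le1 e eN; lia.
Qed.

(* Arcs leaving a residual-closed set are saturated private arcs; arcs entering it carry no flow. *)
Lemma residual_closed_cut f (X : {set V}) : feasible f -> s \in X -> t \notin X ->
  (forall a, step_from src dst a \in X -> residual f a -> step_to src dst a \in X) ->
  exists C, is_cut_in src dst s t N C /\ #|C|%:Z = excess f t.
Proof.
move=> ff sX tX closed; have [f_ge0 f_le1 _] := ff.
have leaving e : src e \in X -> dst e \notin X -> (e \in N) && (f e == 1).
  move=> eX eX'; have : ~~ residual f (e, true) by apply: contra eX' => /(closed (e, true) eX).
  rewrite /residual /= negb_or negbK => /andP[eN fe]; rewrite eN /=.
  by have := f_ge0 e; have := f_le1 e eN; move: fe; lia.
have no_inflow : inflow src dst f X = 0.
  apply: big1 => e /andP[eX eX']; apply/eqP; rewrite eq_le f_ge0 andbT leNgt.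
  by apply: contra eX' => /(closed (e, false) eX).
pose C := [set e | (src e \in X) && (dst e \notin X)].
have outflowE : outflow src dst f X = #|C|%:Z.
  rewrite /outflow -natz -sumr_const; apply: eq_big => [e|e /andP[eX eX']].
    by rewrite inE.
  by case/andP: (leaving e eX eX') => _ /eqP.
exists C; rewrite (flow_value_cut st ff sX tX) no_inflow outflowE subr0; split => //.
split; first by apply/subsetP => e; rewrite inE => /andP[eX eX']; case/andP: (leaving e eX eX').
move=> P [p [pp ->]]; have [e ep /andP[eX eX']] := path_leaves pp sX tX.
by apply/set0Pn; exists e; rewrite !inE ep eX eX'.
Qed.

Lemma menger_cut : exists C, is_cut_in src dst s t N C /\ (#|C| <= sN)%N.
Proof.
pose flow_value k := `[< exists f, feasible f /\ excess f t = k%:Z >].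
have zero_flow : exists k, flow_value k.
  have excess0 v : excess (fun _ => 0) v = 0 by rewrite /excess !big1.
  by exists 0%N; apply/asboolP; exists (fun _ => 0).
have bounded k : flow_value k -> (k <= sN)%N.
  by move=> /asboolP[f [ff fk]]; apply: flow_value_le_sigma ff fk.
case: (ex_maxnP zero_flow bounded) => k /asboolP[f [ff fk]] maxk.
case: (reach_or_closed_cut src dst s t (residual f)) => [rt|[X [sX tX closed]]].
  have [g [fg gk]] := augmenting_walk ff rt.
  have /maxk : flow_value k.+1 by apply/asboolP; exists g; split; rewrite // gk fk; lia.
  by rewrite ltnn.
have [C [cutC Ck]] := residual_closed_cut ff sX tX closed.
have Ck' : #|C| = k by apply/eqP; rewrite -eqz_nat Ck fk.
by exists C; rewrite Ck'; split => //; apply: flow_value_le_sigma ff fk.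
Qed.

Lemma cut_card_ge_sigma C : is_cut_in src dst s t N C -> (sN <= #|C|)%N.
Proof.
move=> [CN meets]; have [g [gp gd]] := sigma_family src dst s t N.
by apply: leq_card_hitting CN _ gd => i; apply: meets.
Qed.

Lemma min_cut_card C : is_min_cut_in src dst s t N C -> #|C| = sN.
Proof.
move=> [cutC minC]; apply/eqP; rewrite eqn_leq cut_card_ge_sigma // andbT.
by have [C' [cutC' C'_le]] := menger_cut; apply: leq_trans (minC _ cutC') C'_le.
Qed.

Lemma exists_min_cut : exists C, is_min_cut_in src dst s t N C.
Proof.
have [C [cutC C_le]] := menger_cut.
by exists C; split => // C' /cut_card_ge_sigma; apply: leq_trans.
Qed.

End Menger.

Section Weights.
Variables (R : realType) (E : finType) (N : {set E}).
Local Open Scope ring_scope.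
Implicit Types (y : player N -> R) (S C : {set E}).

Definition weight y e : R := if insub e is Some i then y i else 0.

Lemma weight_val y i : weight y (val i) = y i.
Proof. by rewrite /weight valK. Qed.

Lemma weight_out y e : e \notin N -> weight y e = 0.
Proof. by move=> eN; rewrite /weight insubF //; apply/negbTE. Qed.

Lemma weight_ge0 y e : (forall i, 0 <= y i) -> 0 <= weight y e.
Proof. by move=> y0; rewrite /weight; case: insub. Qed.

Lemma xsum_weight y S : xsum y S = \sum_(e in S) weight y e.
Proof.
rewrite /xsum (eq_bigr (fun i => weight y (val i))) => [|i _]; last by rewrite weight_val.
rewrite -big_sub_cond [RHS](bigID (mem N)) /= [X in _ = _ + X]big1 ?addr0.
  by apply: eq_bigl => e; rewrite andbC.
by move=> e /andP[_ /weight_out].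
Qed.

Lemma xsum_setIN y S : xsum y (S :&: N) = xsum y S.
Proof. by apply: eq_bigl => i; rewrite in_setI (valP i) andbT. Qed.

Lemma xsumN y : xsum y N = \sum_i y i.
Proof. by apply: eq_bigl => i; rewrite (valP i). Qed.

Lemma xsumZ y c S : xsum (fun i => c * y i) S = c * xsum y S.
Proof. by rewrite /xsum mulr_sumr. Qed.

Lemma sum_indicator C : C \subset N -> \sum_(i : player N) ((val i \in C)%:R : R) = #|C|%:R.
Proof.
move=> CN; rewrite (eq_bigr (fun i => if val i \in C then 1 else 0)) => [|i _].
  rewrite -big_mkcond -/(xsum (fun _ => 1) C) xsum_weight -sum1_card natr_sum.
  apply: eq_bigr => e eC; rewrite /weight.
  by case: insubP => [//|/negP[]]; apply: (subsetP CN).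
by case: (_ \in _).
Qed.

Lemma xsum_family_le y S k (g : 'I_k -> {set E}) : (forall i, 0 <= y i) ->
  (forall j, g j :&: N \subset S) -> (forall j j', j != j' -> g j :&: g j' :&: N = set0) ->
  \sum_(j < k) xsum y (g j) <= xsum y S.
Proof.
move=> y0 gS gd; rewrite /xsum; under eq_bigr do rewrite big_mkcond /=.
rewrite exchange_big [X in _ <= X]big_mkcond /=; apply: ler_sum => i _.
have [j0 ij0|none] := pickP (fun j => val i \in g j); last first.
  by rewrite big1 => [|j _]; [case: ifP | rewrite none].
have -> : val i \in S by apply: (subsetP (gS j0)); rewrite inE ij0 (valP i).
rewrite (bigD1 j0) //= ij0 big1 ?addr0 // => j jj0; case: ifP => // ij.
by have /setP/(_ (val i)) := gd j j0 jj0; rewrite !inE ij ij0 (valP i).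
Qed.

End Weights.

Section CutDistributions.
Variables (R : numDomainType) (E : finType) (N : {set E}).
Local Open Scope ring_scope.
Implicit Types (P : {set E} -> Prop) (lam : {set E} -> R) (C : {set E}).

Definition cut_distribution P lam :=
  [/\ forall C, 0 <= lam C, forall C, ~ P C -> lam C = 0 & \sum_C lam C = 1].

Definition coverage lam (i : player N) : R := \sum_C lam C * (val i \in C)%:R.

Definition dirac_cut C C' : R := (C' == C)%:R.

Lemma sum_dirac_cut C (F : {set E} -> R) : \sum_C' dirac_cut C C' * F C' = F C.
Proof.
rewrite (bigD1 C) //= /dirac_cut eqxx mul1r big1 ?addr0 // => C' /negbTE->.
by rewrite mul0r.
Qed.

Lemma dirac_cut_distribution P C : P C -> cut_distribution P (dirac_cut C).
Proof.
move=> PC; split => [C'|C' PC'|]; rewrite /dirac_cut ?ler0n //.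
  by case: eqP => // eqC; rewrite eqC in PC'.
by under eq_bigr do rewrite -[_%:R]mulr1; rewrite sum_dirac_cut.
Qed.

Lemma coverage_dirac C i : coverage (dirac_cut C) i = (val i \in C)%:R.
Proof. exact: sum_dirac_cut. Qed.

Definition mix_cut (th : R) C lam C' := th * dirac_cut C C' + (1 - th) * lam C'.

Lemma mix_cut_distribution P th C lam : 0 <= th <= 1 -> P C ->
  cut_distribution P lam -> cut_distribution P (mix_cut th C lam).
Proof.
move=> /andP[th0 th1] PC [lam0 lamP lam1]; have [d0 dP d1] := dirac_cut_distribution PC.
split => [C'|C' PC'|].
- by rewrite addr_ge0 // mulr_ge0 // subr_ge0.
- by rewrite /mix_cut dP // lamP // !mulr0 addr0.
- by rewrite big_split /= -!mulr_sumr d1 lam1; ring.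
Qed.

Lemma coverage_mix th C lam i :
  coverage (mix_cut th C lam) i = th * (val i \in C)%:R + (1 - th) * coverage lam i.
Proof.
rewrite /coverage /mix_cut; under eq_bigr do rewrite mulrDl -!mulrA.
by rewrite big_split /= -!mulr_sumr sum_dirac_cut.
Qed.

End CutDistributions.

Section LevelCuts.
Variables (R : realType) (V E : finType) (src dst : E -> V) (s t : V) (N : {set E}).
Local Open Scope ring_scope.
Implicit Types (y : player N -> R) (d : V -> R).

Local Notation is_cut := (is_cut_in src dst s t N).

Definition separating_potential y d :=
  [/\ d s <= 0, 1 <= d t & forall e, d (dst e) <= d (src e) + weight y e].

Definition level_cut d := [set e in N | (d (src e) <= 0) && (0 < d (dst e))].

Definition inner_levels d := [set v | 0 < d v < 1].

Lemma level_cut_is_cut y d : separating_potential y d -> is_cut (level_cut d).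
Proof.
move=> [ds dt tri]; split; first by apply/subsetP => e; rewrite inE => /andP[].
move=> P [p [pp ->]].
have dt' : t \notin [pred v | d v <= 0] by rewrite inE -ltNge; lra.
have [e ep /andP[]] := path_leaves (X := [pred v | d v <= 0]) pp ds dt'.
rewrite !inE -ltNge => e_src e_dst.
have eN : e \in N by apply: contraT => /weight_out eN; have := tri e; rewrite eN; lra.
by apply/set0Pn; exists e; rewrite !inE ep eN e_src e_dst.
Qed.

Lemma level_cut_weight y d th e : separating_potential y d ->
  (forall v, 0 < d v -> th <= d v) -> e \in level_cut d -> th <= weight y e.
Proof.
move=> [_ _ tri] th_le; rewrite inE => /and3P[_ e_src /th_le e_dst].
by have := tri e; lra.
Qed.

Lemma flat_potential_cover y d : (forall i, 0 <= y i) -> separating_potential y d ->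
  inner_levels d = set0 ->
  exists lam, cut_distribution is_cut lam /\ forall i, coverage lam i <= y i.
Proof.
move=> y0 sep flat; exists (dirac_cut R (level_cut d)).
split; first by apply/dirac_cut_distribution/(level_cut_is_cut sep).
move=> i; rewrite coverage_dirac; have [iC|_] := boolP (val i \in _); last exact: y0.
rewrite -[y i]weight_val; apply: (level_cut_weight sep) iC => v dv.
rewrite leNgt; apply/negP => dv1.
have : v \in inner_levels d by rewrite inE dv dv1.
by rewrite flat inE.
Qed.

Definition shift_weights th y (C : {set E}) i := (y i - th * (val i \in C)%:R) / (1 - th).

Definition shift_potential th d v := (if d v <= th then 0 else d v - th) / (1 - th).

(* Cutting the potential at its lowest inner level [th] peels off [th] times the level cut. *)
Section Shift.
Variables (y : player N -> R) (d : V -> R) (th : R).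
Hypotheses (y0 : forall i, 0 <= y i) (sep : separating_potential y d).
Hypotheses (th01 : 0 < th < 1) (th_min : forall v, 0 < d v -> th <= d v).

Local Notation y' := (shift_weights th y (level_cut d)).
Local Notation d' := (shift_potential th d).

Lemma shift_weights_ge0 i : 0 <= y' i.
Proof.
have /andP[_ th1] := th01; apply: divr_ge0; last by lra.
have [iC|_] := boolP (val i \in level_cut d); last by rewrite mulr0 subr0.
by have := level_cut_weight sep th_min iC; rewrite weight_val mulr1; lra.
Qed.

Lemma weight_shift e :
  weight y' e = (weight y e - th * (e \in level_cut d)%:R) / (1 - th).
Proof.
have [eN|eN] := boolP (e \in N); first by rewrite /weight insubT.
have -> : e \in level_cut d = false by rewrite inE (negbTE eN).
by rewrite !weight_out // mulr0 subrr mul0r.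
Qed.

Lemma shift_separating : separating_potential y' d'.
Proof.
have /andP[th0 th1] := th01; have [ds dt tri] := sep; split.
- by rewrite /shift_potential ifT ?mul0r //; lra.
- rewrite /shift_potential ifF; last by apply/negbTE; rewrite -ltNge; lra.
  by rewrite ler_pdivlMr ?mul1r; lra.
move=> e; rewrite weight_shift /shift_potential -mulrDl.
apply: ler_wpM2r; first by rewrite invr_ge0; lra.
have w0 := weight_ge0 e y0; have tri_e := tri e.
have [eC|_] := boolP (e \in level_cut d); last first.
  by rewrite mulr0 subr0; case: (lerP (d (dst e)) th); case: (lerP (d (src e)) th); lra.
have := level_cut_weight sep th_min eC; move: eC; rewrite inE => /and3P[_ e_src _].
by rewrite mulr1; case: (lerP (d (dst e)) th); case: (lerP (d (src e)) th); lra.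
Qed.

Lemma shift_inner_levels v0 : d v0 = th -> inner_levels d' \proper inner_levels d.
Proof.
move=> dv0; have /andP[th0 th1] := th01; apply/properP; split.
  apply/subsetP => v; rewrite !inE /shift_potential; case: ifP => [_|/negbT].
    by rewrite mul0r ltxx.
  by rewrite -ltNge ltr_pdivrMr ?mul1r ?ltr_pdivlMr ?mul0r; lra.
by exists v0; rewrite !inE /shift_potential dv0 ?lexx ?mul0r ?ltxx //; lra.
Qed.

End Shift.

Lemma potential_cut_cover y d : (forall i, 0 <= y i) -> separating_potential y d ->
  exists lam, cut_distribution is_cut lam /\ forall i, coverage lam i <= y i.
Proof.
have [n levels] : exists n, (#|inner_levels d| <= n)%N by exists #|inner_levels d|.
elim: n y d levels => [|n IH] y d levels y0 sep;
  have [flat|[v1 v1_in]] := set_0Vmem (inner_levels d);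
  try exact: flat_potential_cover y0 sep flat.
  by move: levels; rewrite leqn0 cards_eq0 => /eqP flat; rewrite flat inE in v1_in.
pose v0 := [arg min_(v < v1 in inner_levels d) d v]%O; pose th := d v0.
have [th01 th_min] : 0 < th < 1 /\ forall v, 0 < d v -> th <= d v.
  rewrite /th /v0; case: arg_minP => // v0' v0_in v0_min; rewrite inE in v0_in.
  split => // v dv; case: (ltrP (d v) 1) => dv1; first by apply: v0_min; rewrite inE dv dv1.
  by case/andP: v0_in => _ /ltW /le_trans; apply.
have levels' : (#|inner_levels (shift_potential th d)| <= n)%N.
  by rewrite -ltnS (leq_trans _ levels) // proper_card // (shift_inner_levels th01 (erefl th)).
have [lam [lam_dist lam_le]] := IH _ _ levels'
  (shift_weights_ge0 y0 sep th01 th_min) (shift_separating y0 sep th01 th_min).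
have /andP[th0 th1] := th01.
exists (mix_cut th (level_cut d) lam); split.
  by apply: mix_cut_distribution (level_cut_is_cut sep) lam_dist; rewrite !ltW.
move=> i; rewrite coverage_mix.
have := lam_le i; rewrite /shift_weights ler_pdivlMr ?subr_gt0 //; nra.
Qed.

End LevelCuts.

Lemma ler_sum_subseq (R : numDomainType) (T : eqType) (F : T -> R) (s1 s2 : seq T) :
  subseq s1 s2 -> (forall x, 0 <= F x)%R ->
  (\sum_(x <- s1) F x <= \sum_(x <- s2) F x)%R.
Proof.
move=> /subseqP[m _ ->] F0; elim: s2 m => [|x s2 IH] [|[] m] /=; rewrite ?big_nil //.
- by rewrite sumr_ge0.
- by rewrite !big_cons lerD2l.
- by rewrite big_cons ler_wpDl.
Qed.

Section CutHull.
Variables (R : realType) (V E : finType) (src dst : E -> V) (s t : V) (N : {set E}).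
Local Open Scope ring_scope.
Implicit Types (y : player N -> R) (lam : {set E} -> R).

Local Notation is_cut := (is_cut_in src dst s t N).
Local Notation is_min_cut := (is_min_cut_in src dst s t N).
Local Notation sN := (sigma src dst s t N).

Lemma in_hull_min_cutsP y : in_hull_min_cuts src dst s t y <->
  exists lam, cut_distribution is_min_cut lam /\ forall i, y i = coverage lam i.
Proof. by split => [[lam [? [? [? ?]]]]|[lam [[? ? ?] ?]]]; exists lam. Qed.

Lemma min_cut_in_hull C : is_min_cut C ->
  in_hull_min_cuts src dst s t (fun i : player N => (val i \in C)%:R : R).
Proof.
move=> minC; apply/in_hull_min_cutsP; exists (dirac_cut R C).
by split => [|i]; [apply: dirac_cut_distribution | rewrite coverage_dirac].
Qed.

Lemma sum_coverage (P : {set E} -> Prop) lam : (forall C, P C -> C \subset N) ->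
  cut_distribution P lam -> \sum_(i : player N) coverage lam i = \sum_C lam C * #|C|%:R.
Proof.
move=> PN [_ lamP _]; rewrite /coverage exchange_big; apply: eq_bigr => C _.
rewrite -mulr_sumr; case: (asboolP (P C)) => [/PN CN|nPC]; first by rewrite sum_indicator.
by rewrite lamP // !mul0r.
Qed.

Lemma cut_cover_min_cuts y lam : cut_distribution is_cut lam ->
  (forall i, coverage lam i <= y i) -> xsum y N <= sN%:R -> in_hull_min_cuts src dst s t y.
Proof.
move=> lam_dist lam_le yN; have [lam0 lamP lam1] := lam_dist.
have cut_subN C : is_cut C -> C \subset N by case.
have slack_ge0 C : 0 <= lam C * (#|C|%:R - sN%:R).
  case: (asboolP (is_cut C)) => [/cut_card_ge_sigma|/lamP->]; last by rewrite mul0r.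
  by rewrite -(ler_nat R) -subr_ge0 => ?; rewrite mulr_ge0.
have total : \sum_C lam C * (#|C|%:R - sN%:R) + \sum_i (y i - coverage lam i) =
    xsum y N - sN%:R.
  under eq_bigr do rewrite mulrBr.
  by rewrite !sumrB -mulr_suml lam1 mul1r -(sum_coverage cut_subN lam_dist) xsumN; ring.
have [slack0 tight] : \sum_C lam C * (#|C|%:R - sN%:R) = 0 /\ \sum_i (y i - coverage lam i) = 0.
  have : 0 <= \sum_C lam C * (#|C|%:R - sN%:R) by apply: sumr_ge0.
  have : 0 <= \sum_i (y i - coverage lam i) by apply: sumr_ge0 => i _; rewrite subr_ge0.
  lra.
apply/in_hull_min_cutsP; exists lam; split; last first.
  move=> i; apply/eqP; rewrite -subr_eq0; apply/eqP/(psumr_eq0P _ tight) => // j _.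
  by rewrite subr_ge0.
split => // C nminC; case: (asboolP (is_cut C)) => [cutC|/lamP//].
have /eqP := @psumr_eq0P _ _ _ _ (fun C _ => slack_ge0 C) slack0 C isT.
rewrite mulf_eq0 subr_eq0 eqr_nat => /orP[/eqP//|/eqP CsN].
by case: nminC; split => // C' /cut_card_ge_sigma; rewrite CsN.
Qed.

End CutHull.

Section PathPolytope.
Variables (R : realType) (V E : finType) (src dst : E -> V) (s t : V) (N : {set E}).
Local Open Scope ring_scope.
Implicit Types (y : player N -> R) (l : seq (E * bool)).

Local Notation is_walk := (is_walk src dst).
Local Notation walk_end := (walk_end src dst).
Local Notation is_min_cut := (is_min_cut_in src dst s t N).
Local Notation sN := (sigma src dst s t N).

Definition in_path_polytope y := [/\ forall i, 0 <= y i, xsum y N = sN%:R &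
  forall P, is_path src dst s t P -> 1 <= xsum y P].

Lemma hull_path_polytope y : s != t ->
  (forall P, is_path src dst s t P -> P :&: N != set0) ->
  in_hull_min_cuts src dst s t y -> in_path_polytope y.
Proof.
move=> st path_meets_N /in_hull_min_cutsP[lam [lam_dist ylam]].
have [lam0 lamP lam1] := lam_dist.
split.
- by move=> i; rewrite ylam; apply: sumr_ge0 => C _; rewrite mulr_ge0.
- rewrite xsumN (eq_bigr _ (fun i _ => ylam i)).
  have min_cut_subN C : is_min_cut C -> C \subset N by case=> [[]].
  rewrite (sum_coverage min_cut_subN lam_dist).
  rewrite -[RHS]mul1r -lam1 mulr_suml; apply: eq_bigr => C _.
  case: (asboolP (is_min_cut C)) => [minC|/lamP->]; last by rewrite !mul0r.
  by rewrite (min_cut_card st path_meets_N minC).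
move=> P pathP; rewrite -lam1 /xsum (eq_bigr _ (fun i _ => ylam i)) exchange_big /=.
apply: ler_sum => C _; rewrite -mulr_sumr.
case: (asboolP (is_min_cut C)) => [[[CN meets] _]|/lamP->]; last by rewrite !mul0r.
have /set0Pn[e /setIP[eP eC]] := meets P pathP.
rewrite -[X in X <= _]mulr1 ler_wpM2l // (bigD1 (Sub e (subsetP CN e eC))) //=.
by rewrite eC ler_wpDr // sumr_ge0.
Qed.

Definition walk_length y l := \sum_(a <- l) weight y a.1.

(* The length of a shortest forward walk from [s] to [v], capped at 1. *)
Definition potential_set y v : classical_sets.set R := fun r => r = 1 \/
  exists l, [/\ is_walk s l, all snd l, walk_end s l = v & r = walk_length y l].

Definition potential y v := inf (potential_set y v).

Lemma forward_walk_length_ge1 y l : in_path_polytope y ->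
  is_walk s l -> all snd l -> walk_end s l = t -> 1 <= walk_length y l.
Proof.
move=> [y0 _ path_ge1] wl fwd lt; have [l' [wl' lt' ul' sub]] := shorten_walk wl.
apply: le_trans (ler_sum_subseq sub (fun a => weight_ge0 a.1 y0)).
have fwd' : all snd l' by apply/allP => a /(mem_subseq sub) /(allP fwd).
have pp := simple_forward_walk_path wl' fwd' ul'; rewrite lt' lt in pp.
rewrite /walk_length -(big_map fst xpredT) (big_uniq _ (path_seq_uniq pp)).
apply: le_trans (path_ge1 _ (ex_intro _ _ (conj pp erefl))) _.
by rewrite xsum_weight (eq_bigl (mem (map fst l'))) // => e; rewrite inE.
Qed.

Lemma potential_separating y :
  in_path_polytope y -> separating_potential src dst s t y (potential y).
Proof.
move=> poly; have [y0 _ _] := poly.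
have lbound v : classical_sets.has_lbound (potential_set y v).
  exists 0 => r [->|[l [_ _ _ ->]]]; first exact: ler01.
  by apply: sumr_ge0 => a _; apply: weight_ge0.
have le_potential v r l : is_walk s l -> all snd l -> walk_end s l = v ->
    r = walk_length y l -> potential y v <= r.
  by move=> *; apply: ge_inf (lbound v) _ _; right; exists l.
have nonempty v : classical_sets.nonempty (potential_set y v) by exists 1; left.
split.
- by apply: (le_potential _ _ [::]) => //; rewrite /walk_length big_nil.
- apply: lb_le_inf (nonempty t) _ => r [->|[l [wl fwd lt ->]]] //.
  exact: forward_walk_length_ge1.
move=> e; rewrite -lerBlDr; apply: lb_le_inf (nonempty _) _ => r [->|[l [wl fwd le ->]]].
  have : potential y (dst e) <= 1 by apply: ge_inf (lbound _) _ _; left.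
  by have := weight_ge0 e y0; lra.
rewrite lerBlDr; apply: (le_potential _ _ (rcons l (e, true))).
- by rewrite -cats1 is_walk_cat wl le /= eqxx.
- by rewrite all_rcons fwd.
- by rewrite -cats1 walk_end_cat le.
- by rewrite /walk_length -cats1 big_cat big_seq1.
Qed.

Lemma path_polytope_hull y : in_path_polytope y -> in_hull_min_cuts src dst s t y.
Proof.
move=> poly; have [y0 yN _] := poly.
have [lam [lam_dist lam_le]] := potential_cut_cover y0 (potential_separating poly).
by apply: cut_cover_min_cuts lam_dist lam_le _; rewrite yN.
Qed.

End PathPolytope.

Lemma source_neq_sink (V E : finType) (src dst : E -> V) (s t : V) (N : {set E}) :
  (forall P, is_path src dst s t P -> P :&: N != set0) -> s != t.
Proof.
move=> path_meets_N; apply/eqP => st.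
have /path_meets_N : is_path src dst s t set0.
  by exists [::]; split; [rewrite /is_path_seq /= st !eqxx | apply/setP => e; rewrite !inE].
by rewrite set0I eqxx.
Qed.

Section ApproximateCore.
Variables (R : realType) (V E : finType) (src dst : E -> V) (s t : V) (N : {set E}).
Hypothesis path_meets_N : forall P, is_path src dst s t P -> P :&: N != set0.
Hypothesis has_path : exists P, is_path src dst s t P.
Local Open Scope ring_scope.
Implicit Types (x y : player N -> R) (S : {set E}).

Local Notation sN := (sigma src dst s t N).
Local Notation sE := (sigma src dst s t [set: E]).
Local Notation gamma := (gamma src dst s t N).
Local Notation eps_star := ((sE%:R : R) / sN%:R - 1).
Local Notation in_core := (in_approx_core src dst s t).

Lemma gammaN_sigmaT : gamma N = sE.
Proof.
rewrite /gamma /sigma; apply: eq_bigl => k; apply/asboolP/asboolP => -[f [fp fd]].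
  by exists f; split => [i|i j /fd ->]; [case: (fp i) | rewrite setIT].
exists f; split => [i|i j /fd]; last by rewrite setIT.
by split => //; apply/subsetP => e _; rewrite !inE orbN.
Qed.

Lemma card_arcs_gt0 : (0 < #|E|)%N.
Proof. by have [P /path_meets_N /set0Pn[e _]] := has_path; apply/card_gt0P; exists e. Qed.

Lemma sigma_gt0 F : (0 < sigma src dst s t F)%N.
Proof.
have [P pathP] := has_path; apply: sigma_max card_arcs_gt0.
by exists (fun _ => P); split => // i j; rewrite !ord1.
Qed.

Lemma gamma_path_gt0 P : is_path src dst s t P -> (0 < gamma (P :&: N))%N.
Proof.
move=> pathP; apply: gamma_max card_arcs_gt0.
exists (fun _ => P); split => [i|i j]; last by rewrite !ord1.
by split => //; apply/subsetP => e eP; rewrite !inE eP; case: (e \in N).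
Qed.

Lemma gamma_le_xsum y S : in_path_polytope src dst s t y -> S \subset N ->
  (gamma S)%:R <= xsum y S.
Proof.
move=> [y0 _ path_ge1] SN; have [g [gp gd]] := gamma_family src dst s t N S.
have gS j : g j :&: N \subset S.
  apply/subsetP => e /setIP[ej eN]; have [_ /subsetP/(_ e ej)] := gp j.
  by rewrite !inE eN orbF.
have gdN j j' : j != j' -> g j :&: g j' :&: N = set0 by move/gd->; rewrite set0I.
apply: le_trans (xsum_family_le y0 gS gdN).
have -> : (gamma S)%:R = \sum_(j < gamma S) (1 : R) by rewrite sumr_const card_ord.
by apply: ler_sum => j _; apply: path_ge1; case: (gp j).
Qed.

Lemma sigma_natr_gt0 F : 0 < (sigma src dst s t F)%:R :> R.
Proof. by rewrite ltr0n sigma_gt0. Qed.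

Lemma add1_eps_star : 1 + eps_star = sE%:R / sN%:R.
Proof. by rewrite addrCA subrr addr0. Qed.

Lemma approx_core_eps_le eps x : in_core eps x -> eps <= eps_star.
Proof.
move=> [x0 [xN x_ge]]; have sN_gt0 := sigma_natr_gt0 N; have sE_gt0 := sigma_natr_gt0 [set: E].
case: (lerP (1 + eps) 0) => [eps_le|eps_gt].
  have : 0 <= sE%:R / sN%:R :> R by rewrite divr_ge0 ?ltW.
  lra.
have [g [gp gd]] := sigma_family src dst s t N.
have : (1 + eps) * sN%:R <= sE%:R.
  rewrite -gammaN_sigmaT -xN; apply: le_trans (xsum_family_le x0 (fun j => subsetIr _ _) gd).
  have -> : (1 + eps) * sN%:R = \sum_(j < sN) (1 + eps) by rewrite sumr_const card_ord mulr_natr.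
  apply: ler_sum => j _; rewrite -xsum_setIN; apply: le_trans (x_ge _ (subsetIr _ _)).
  by rewrite ler_pMr // ler1n gamma_path_gt0.
by rewrite -ler_pdivlMr //; lra.
Qed.

Lemma polytope_scaled_core y : in_path_polytope src dst s t y ->
  in_core eps_star (fun i => sE%:R / sN%:R * y i).
Proof.
move=> poly; have [y0 yN _] := poly; have sN_gt0 := sigma_natr_gt0 N.
have ratio_ge0 : 0 <= sE%:R / sN%:R :> R by rewrite divr_ge0 // ltW.
split; [|split].
- by move=> i; rewrite mulr_ge0.
- by rewrite xsumZ yN gammaN_sigmaT divfK // lt0r_neq0.
- move=> S SN; rewrite xsumZ add1_eps_star.
  exact: ler_wpM2l ratio_ge0 _ _ (gamma_le_xsum poly SN).
Qed.

Lemma approx_core_scaled_polytope x : in_core eps_star x ->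
  in_path_polytope src dst s t (fun i => sN%:R / sE%:R * x i).
Proof.
move=> [x0 [xN x_ge]]; have sN_gt0 := sigma_natr_gt0 N; have sE_gt0 := sigma_natr_gt0 [set: E].
split.
- by move=> i; rewrite mulr_ge0 // divr_ge0 // ltW.
- by rewrite xsumZ xN gammaN_sigmaT divfK // lt0r_neq0.
move=> P pathP; have := x_ge _ (subsetIr P N); rewrite xsum_setIN add1_eps_star => x_geP.
rewrite xsumZ mulrAC ler_pdivlMr // mul1r mulrC -ler_pdivrMr //.
by apply: le_trans x_geP; rewrite ler_pMr ?divr_gt0 // ler1n gamma_path_gt0.
Qed.

Lemma scaled_approx_coreP y :
  (exists x, in_core eps_star x /\ forall i, y i = sN%:R / sE%:R * x i) <->
  in_path_polytope src dst s t y.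
Proof.
have sN_gt0 := sigma_natr_gt0 N; have sE_gt0 := sigma_natr_gt0 [set: E].
split => [[x [core_x /funext->]]|poly]; first exact: approx_core_scaled_polytope.
exists (fun i => sE%:R / sN%:R * y i); split; first exact: polytope_scaled_core.
by move=> i; field; rewrite !lt0r_neq0.
Qed.

End ApproximateCore.

Local Open Scope ring_scope.

Theorem theorem1 (R : realType) (V E : finType) (src dst : E -> V) (s t : V)
  (N : {set E}) :
  (* (A1) every s-t path contains an arc of N *)
  (forall P, is_path src dst s t P -> P :&: N != set0) ->
  (* (A2) every arc lies on some s-t path *)
  (forall e : E, exists P, is_path src dst s t P /\ e \in P) ->
  (* non-degeneracy: D has an s-t path *)
  (exists P, is_path src dst s t P) ->
  let sE := sigma src dst s t [set: E] in
  let sN := sigma src dst s t N in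
  let eps_star : R := sE%:R / sN%:R - 1 in
  (* eps_star = max { eps : C_eps(Gamma_D) <> empty } *)
  ((exists x : player N -> R, in_approx_core src dst s t eps_star x) /\
   (forall (eps : R) (x : player N -> R), in_approx_core src dst s t eps x -> eps <= eps_star)) /\
  (* (i) *)
  (forall y : player N -> R,
     (exists x : player N -> R, in_approx_core src dst s t eps_star x /\
                forall i, y i = sN%:R / sE%:R * x i) <->
     ((forall i, 0 <= y i) /\ xsum y N = sN%:R /\
      (forall P, is_path src dst s t P -> 1 <= xsum y P))) /\
  (* (ii) *)
  (forall y : player N -> R,
     (exists x : player N -> R, in_approx_core src dst s t eps_star x /\
                forall i, y i = sN%:R / sE%:R * x i) <->
     in_hull_min_cuts src dst s t y).
Proof.
move=> path_meets_N _ has_path; cbv zeta.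
have st := source_neq_sink path_meets_N.
have scaledP (y : player N -> R) := scaled_approx_coreP path_meets_N has_path y.
split; [split|split] => [|eps x|y|y].
- have [C minC] := exists_min_cut st path_meets_N.
  have := hull_path_polytope st path_meets_N (min_cut_in_hull R minC).
  by move/scaledP => [x [core_x _]]; exists x.
- exact: approx_core_eps_le.
- by rewrite scaledP; split => [[]|[? []]]; split.
- by rewrite scaledP; split; [apply: path_polytope_hull | apply: hull_path_polytope].
Qed.
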